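(* Let $n\ge1$, $l>2$ an odd integer, $\varepsilon$ a primitive $l$-th root of unity, $\lambda=(\lambda_i)_{i=1}^n\in\{0,\dots,l-1\}^n$ with $\lambda\neq0$, and $\mathbf a_+,\mathbf a_-\in\mathbb C^\times$. Write $\mathrm{supp}(\lambda)=\{i\mid\lambda_i\ne0\}=\{i_1,\dots,i_m\}$ with $i_1<\dots<i_m$, and $\lambda^{(i)}=\sum_{k=1}^{i-1}\lambda_k-\sum_{k=i+1}^n\lambda_k$. Then $\mathbf a_+=\mathbf a_-\varepsilon^{2(\lambda^{(i)}+i)}$ for all $i\in\mathrm{supp}(\lambda)$ if and only if both of the following hold: (a) for every $2\le r\le m$, $$\lambda_{i_r}\equiv(-1)^{r-1}\lambda_{i_1}+(-1)^r i_1-i_r+2\sum_{k=2}^{r-1}(-1)^{r-1+k}i_k\not\equiv0\pmod l;$$ (b) $\mathbf a_+=\mathbf a_-\varepsilon^{2\sum_{k=1}^m(-1)^{k-1}i_k}$ if $m$ is odd, and $\mathbf a_+=\mathbf a_-\varepsilon^{2(\lambda_{i_1}+\sum_{k=2}^m(-1)^k i_k)}$ if $m$ is even. *)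

From mathcomp Require Import all_boot all_order all_algebra.
From mathcomp Require Import complex Rstruct.
Set Implicit Arguments.
Unset Strict Implicit.
Unset Printing Implicit Defensive.
Import Order.TTheory GRing.Theory Num.Theory.

Definition Cplx : numClosedFieldType := complex Rdefinitions.R.

(* lam : nat -> nat encodes lambda = (lam 1, ..., lam n), indices 1-based. *)

Definition supp (n : nat) (lam : nat -> nat) : seq nat :=
  [seq i <- iota 1 n | lam i != 0%N].

(* i_k (1-based k) *)
Definition ith (n : nat) (lam : nat -> nat) (k : nat) : nat :=
  nth 0%N (supp n lam) k.-1.

Definition lam_up (n : nat) (lam : nat -> nat) (i : nat) : int :=
  ((\sum_(1 <= k < i) lam k)%N)%:Z - ((\sum_(i.+1 <= k < n.+1) lam k)%N)%:Z.

Local Open Scope ring_scope.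

Definition condA_rhs (n : nat) (lam : nat -> nat) (r : nat) : int :=
  (-1) ^+ r.-1 * (lam (ith n lam 1))%:Z
  + (-1) ^+ r * (ith n lam 1)%:Z
  - (ith n lam r)%:Z
  + 2 * \sum_(2 <= k < r) (-1) ^+ (r.-1 + k) * (ith n lam k)%:Z.

Definition condB_odd_exp (n : nat) (lam : nat -> nat) : int :=
  2 * \sum_(1 <= k < (size (supp n lam)).+1) (-1) ^+ k.-1 * (ith n lam k)%:Z.

Definition condB_even_exp (n : nat) (lam : nat -> nat) : int :=
  2 * ((lam (ith n lam 1))%:Z
       + \sum_(2 <= k < (size (supp n lam)).+1) (-1) ^+ k * (ith n lam k)%:Z).

(* Write w_r = lambda^(i_r) + i_r for r = 1..m.  Since l is odd, eps^2 is again
   a primitive l-th root of unity, so the left-hand side says that all w_r are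
   congruent mod l and that a_+ = a_- eps^(2 w_1).  Consecutive exponents differ
   by w_(r+1) - w_r = lambda_(i_(r+1)) + lambda_(i_r) + i_(r+1) - i_r, while the
   right-hand sides c_r of (a) satisfy c_2 = i_1 - i_2 - lambda_(i_1) and
   c_(r+1) + c_r = i_r - i_(r+1).  Hence with d_r = lambda_(i_r) - c_r we get
   w_2 - w_1 = d_2 and w_(r+1) - w_r = d_(r+1) + d_r, so the congruences
   w_r = w_1 mod l are equivalent to (a); the clause c_r <> 0 mod l is automatic
   because 0 < lambda_(i_r) < l.  Finally half the exponent in (b) telescopes to
   i_1 - sum_(r=2..m) c_r, whereas w_1 = i_1 - sum_(r=2..m) lambda_(i_r); under
   (a) the two agree mod l, and (b) is the remaining condition on a_+. *)

From mathcomp Require Import all_boot all_order all_algebra.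
From mathcomp Require Import complex Rstruct.
From mathcomp Require Import ring.
Set Implicit Arguments.
Unset Strict Implicit.
Unset Printing Implicit Defensive.
Import Order.TTheory GRing.Theory Num.Theory.
Local Open Scope ring_scope.

Section OddPrimitiveRoot.
Variables (F : fieldType) (l : nat) (eps : F).
Hypotheses (l_odd : odd l) (eps_prim : l.-primitive_root eps).

Lemma prim_expz_eq1 (z : int) : (eps ^ z == 1) = (l%:Z %| z)%Z.
Proof.
case: z => k; first by rewrite /dvdz /= -(prim_order_dvd eps_prim).
by rewrite NegzE -exprnN invr_eq1 dvdzE abszN -(prim_order_dvd eps_prim).
Qed.

Lemma prim_expz2_eq (u v : int) :
  eps ^ (2 * u) = eps ^ (2 * v) <-> (l%:Z %| u - v)%Z.
Proof.
have eps_neq0 : eps != 0.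
  apply/eqP => eps0; have := prim_expr_order eps_prim.
  rewrite eps0 expr0n gtn_eqF ?(prim_order_gt0 eps_prim) // => /eqP.
  by rewrite eq_sym oner_eq0.
have coprime_l2 : coprimez l%:Z 2 by have := l_odd; rewrite -coprimen2.
rewrite -(Gauss_dvdzr _ coprime_l2) -prim_expz_eq1 mulrBr expfzDr ?expfz_neq0 //.
have ev_neq0 := expfz_neq0 (2 * v) eps_neq0.
rewrite -invr_expz -[X in _ == X](divff ev_neq0) (inj_eq (mulIf _)) ?invr_eq0 //.
by split=> [->|/eqP].
Qed.

Lemma prim_expz2_all (P : pred nat) (w : nat -> int) (r0 : nat) (ap am : F) :
  am != 0 -> P r0 ->
  (forall r, P r -> ap = am * eps ^ (2 * w r)) <->
  (forall r, P r -> (l%:Z %| w r - w r0)%Z) /\ ap = am * eps ^ (2 * w r0).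
Proof.
move=> am_neq0 Pr0; split=> [Hw | [Hdvd ->] r Pr].
  split=> [r Pr|]; last exact: Hw.
  by apply/prim_expz2_eq/(mulfI am_neq0); rewrite -!Hw.
by congr (_ * _); apply/esym/prim_expz2_eq/Hdvd.
Qed.

End OddPrimitiveRoot.

Section Support.
Variables (n : nat) (lam : nat -> nat).
Local Notation s := (supp n lam).
Local Notation m := (size (supp n lam)).
Local Notation ith := (ith n lam).

Lemma mem_supp i : (i \in s) = (1 <= i <= n)%N && (lam i != 0%N).
Proof. by rewrite mem_filter mem_iota add1n ltnS andbC. Qed.

Lemma ith_supp r : (1 <= r <= m)%N -> ith r \in s.
Proof. by case: r => // r /andP[_ rm]; apply: mem_nth. Qed.

Lemma all_supp_ith (P : nat -> Prop) :
  (forall i, i \in s -> P i) <-> (forall r, (1 <= r <= m)%N -> P (ith r)).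
Proof.
split=> [H r /ith_supp/H //| H i /(nthP 0%N)[r rm <-]].
exact: (H r.+1).
Qed.

Lemma ltn_ith j r : (1 <= j <= m)%N -> (1 <= r <= m)%N ->
  (ith j < ith r)%N = (j < r)%N.
Proof.
case: j r => [|j] [|r] // /andP[_ jm] /andP[_ rm].
exact: (lt_sorted_ltn_nth 0%N (lt_sorted_filter _ (iota_ltn_sorted 1 n))).
Qed.

Lemma sum_supp (Q : pred nat) :
  (\sum_(1 <= k < n.+1 | Q k) lam k =
   \sum_(1 <= r < m.+1 | Q (ith r)) lam (ith r))%N.
Proof.
rewrite [RHS]big_add1 /ith /= -(big_nth 0%N) big_filter_cond.
rewrite /index_iota subSS subn0 big_mkcond [RHS]big_mkcond.
by apply: eq_bigr => k _; case: eqP => [->|]; case: (Q k).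
Qed.

Local Notation lam_at k := ((lam (ith k))%:Z).

Lemma lam_up_ith r : (1 <= r <= m)%N ->
  lam_up n lam (ith r) =
  \sum_(1 <= k < r) lam_at k - \sum_(r.+1 <= k < m.+1) lam_at k.
Proof.
move=> r_range.
have /andP[/andP[_ i_le_n] _] : (1 <= ith r <= n)%N && (lam (ith r) != 0%N).
  by rewrite -mem_supp ith_supp.
have below : (\sum_(1 <= k < ith r) lam k = \sum_(1 <= k < r) lam (ith k))%N.
  rewrite (big_nat_widen _ _ n.+1) ?leqW // sum_supp.
  rewrite [RHS](big_nat_widen _ _ m.+1); last by case/andP: r_range => _ /leqW.
  by apply: congr_big_nat => // k k_range; rewrite ltn_ith.
have above :
    (\sum_((ith r).+1 <= k < n.+1) lam k = \sum_(r.+1 <= k < m.+1) lam (ith k))%N.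
  rewrite (big_nat_widenl _ 1) // sum_supp [RHS](big_nat_widenl _ 1) //.
  by apply: congr_big_nat => // k k_range; rewrite ltn_ith.
by rewrite /lam_up below above !(big_morph Posz PoszD (erefl 0%:Z)).
Qed.

Lemma supp_lam_ndvd (l : nat) : (forall i, (1 <= i <= n)%N -> (lam i < l)%N) ->
  forall r, (1 <= r <= m)%N -> ~~ (l%:Z %| lam_at r)%Z.
Proof.
move=> lam_lt r /ith_supp; rewrite mem_supp => /andP[i_range lam_neq0].
by rewrite dvdzE /= gtnNdvd ?lt0n ?lam_lt.
Qed.

Local Notation i_at k := ((ith k)%:Z).

Definition weight r : int := lam_up n lam (ith r) + i_at r.

Lemma weightS r : (0 < r < m)%N ->
  weight r.+1 - weight r = lam_at r.+1 + lam_at r + i_at r.+1 - i_at r.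
Proof.
case/andP=> r_gt0 rm; rewrite /weight !lam_up_ith; last 2 first.
- by rewrite r_gt0 ltnW.
- by rewrite rm.
rewrite big_nat_recr; last exact: r_gt0.
rewrite (big_ltn (m := r.+1)); last exact: rm.
rewrite /=; ring.
Qed.

Definition condA_defect r : int := lam_at r - condA_rhs n lam r.

Lemma condA_rhs2 : condA_rhs n lam 2 = i_at 1 - i_at 2 - lam_at 1.
Proof. by rewrite /condA_rhs big_geq //=; ring. Qed.

Lemma condA_rhsSS r : (0 < r)%N ->
  condA_rhs n lam r.+2 + condA_rhs n lam r.+1 = i_at r.+1 - i_at r.+2.
Proof.
move=> r_gt0; rewrite /condA_rhs (big_nat_recr r.+1); last exact: r_gt0.
have -> : \sum_(2 <= k < r.+1) (-1) ^+ (r.+1 + k) * i_at k =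
          - \sum_(2 <= k < r.+1) (-1) ^+ (r + k) * i_at k.
  by rewrite -sumrN; apply: eq_bigr => k _; rewrite addSn exprS mulN1r mulNr.
rewrite /= addnn -[(-1) ^+ (r.+1).*2]signr_odd odd_double !exprS; ring.
Qed.

Lemma weight2 : (2 <= m)%N -> weight 2 - weight 1 = condA_defect 2.
Proof. by move=> m2; rewrite weightS ?m2 // /condA_defect condA_rhs2; ring. Qed.

Lemma weightSS r : (0 < r)%N -> (r.+2 <= m)%N ->
  weight r.+2 - weight r.+1 = condA_defect r.+2 + condA_defect r.+1.
Proof.
move=> r_gt0 rm; rewrite weightS ?rm // /condA_defect.
by rewrite addrACA -opprD condA_rhsSS //; ring.
Qed.

Lemma weight_dvd_iff (d : int) :
  (forall r, (1 <= r <= m)%N -> (d %| weight r - weight 1)%Z) <->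
  (forall r, (2 <= r <= m)%N -> (d %| condA_defect r)%Z).
Proof.
split=> Hd.
  elim=> [//|[//|[|r] IH] /andP[_ rm]]; first by rewrite -weight2 // Hd.
  have := weightSS (isT : (0 < r.+1)%N) rm.
  move/(congr1 (fun z => z - condA_defect r.+2)); rewrite addrK => <-.
  have -> : weight r.+3 - weight r.+2 =
            (weight r.+3 - weight 1) - (weight r.+2 - weight 1).
    by rewrite opprB addrA subrK.
  by apply: rpredB (rpredB (Hd _ _) (Hd _ _)) (IH _); rewrite ?rm ?(ltnW rm).
elim=> [//|[|r] IH /andP[_ rm]]; first by rewrite subrr rpred0.
rewrite -(subrKA (weight r.+1)) rpredD ?IH ?(ltnW rm) //.
case: r IH rm => [|r] _ rm; first by rewrite weight2 // Hd.
by rewrite weightSS // rpredD ?Hd ?rm ?(ltnW rm).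
Qed.

Lemma condA_iff (d : int) :
  (forall r, (2 <= r <= m)%N -> ~~ (d %| lam_at r)%Z) ->
  (forall r, (2 <= r <= m)%N ->
     (lam_at r = condA_rhs n lam r %[mod d])%Z /\
     ~~ (d %| condA_rhs n lam r)%Z) <->
  (forall r, (2 <= r <= m)%N -> (d %| condA_defect r)%Z).
Proof.
move=> lam_ndvd; split=> H r r_range.
  by have [/eqP] := H r r_range; rewrite eqz_mod_dvd.
have d_defect := H r r_range; split; first by apply/eqP; rewrite eqz_mod_dvd.
apply: contra (lam_ndvd r r_range) => d_rhs.
by rewrite -(subrK (condA_rhs n lam r) (lam_at r)) rpredD.
Qed.

Definition condB_half p : int :=
  if odd p then \sum_(1 <= k < p.+1) (-1) ^+ k.-1 * i_at k
  else lam_at 1 + \sum_(2 <= k < p.+1) (-1) ^+ k * i_at k.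

Lemma condB_exp :
  (if odd m then condB_odd_exp n lam else condB_even_exp n lam) = 2 * condB_half m.
Proof. by rewrite /condB_half; case: ifP. Qed.

Lemma condB_halfS p : (0 < p)%N ->
  condB_half p.+1 = condB_half p - condA_rhs n lam p.+1.
Proof.
move=> p_gt0.
have odd_sumE q : (0 < q)%N -> \sum_(1 <= k < q.+1) (-1) ^+ k.-1 * i_at k =
    i_at 1 - \sum_(2 <= k < q.+1) (-1) ^+ k * i_at k.
  move=> q_gt0; rewrite big_ltn // mul1r -sumrN; congr (_ + _).
  by apply: eq_big_nat => -[|k] // _; rewrite exprS mulN1r mulNr opprK.
rewrite /condB_half /condA_rhs /=.
have -> : \sum_(2 <= k < p.+1) (-1) ^+ (p + k) * i_at k =
          (-1) ^+ p * \sum_(2 <= k < p.+1) (-1) ^+ k * i_at k.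
  by rewrite mulr_sumr; apply: eq_bigr => k _; rewrite exprD mulrA.
rewrite !odd_sumE // (big_nat_recr p.+1 2) //= exprS -[(-1) ^+ p]signr_odd.
by case: (odd p) => /=; ring.
Qed.

Lemma condB_halfE p : (0 < p)%N ->
  condB_half p = i_at 1 - \sum_(2 <= r < p.+1) condA_rhs n lam r.
Proof.
elim: p => [//|[_ _|p IH _]].
  by rewrite /condB_half /= big_nat1 big_geq //; ring.
by rewrite condB_halfS // IH // (big_nat_recr p.+2) //=; ring.
Qed.

Lemma weight1_sub_condB_half : (0 < m)%N ->
  weight 1 - condB_half m = - \sum_(2 <= r < m.+1) condA_defect r.
Proof.
move=> m_gt0; rewrite /weight lam_up_ith ?m_gt0 // condB_halfE // big_geq //.
by rewrite /condA_defect sumrB; ring.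
Qed.

End Support.

Theorem proposition4p15 (n l : nat) (eps : Cplx) (lam : nat -> nat)
    (ap am : Cplx) :
  (1 <= n)%N -> (2 < l)%N -> odd l -> l.-primitive_root eps ->
  (forall i, (1 <= i <= n)%N -> (lam i < l)%N) ->
  (exists2 i, (1 <= i <= n)%N & lam i != 0%N) ->
  ap != 0 -> am != 0 ->
  ((forall i, i \in supp n lam ->
      ap = am * eps ^ (2 * (lam_up n lam i + (i%:Z))))
   <->
   ((forall r, (2 <= r <= size (supp n lam))%N ->
       ((lam (ith n lam r))%:Z = condA_rhs n lam r %[mod (l%:Z)])%Z
       /\ ~~ ((l%:Z) %| condA_rhs n lam r)%Z)
    /\ (if odd (size (supp n lam))
        then ap = am * eps ^ condB_odd_exp n lam
        else ap = am * eps ^ condB_even_exp n lam))).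
Proof.
move=> _ _ l_odd eps_prim lam_lt [i0 i0_range lam_i0] _ am_neq0.
have m_gt0 : (0 < size (supp n lam))%N.
  by move: (mem_supp n lam i0); rewrite i0_range lam_i0; case: (supp n lam).
apply: iff_trans (all_supp_ith _ _ _) _.
apply: iff_trans (prim_expz2_all l_odd eps_prim (weight n lam) (r0 := 1%N) ap am_neq0 _) _.
  by rewrite m_gt0.
rewrite /= weight_dvd_iff condA_iff; last first.
  by move=> r /andP[/ltnW r_gt0 rm]; apply: supp_lam_ndvd; rewrite ?r_gt0.
rewrite -(fun_if (fun e => ap = am * eps ^ e)) condB_exp.
have eps_weight1 :
    (forall r, (2 <= r <= size (supp n lam))%N -> (l%:Z %| condA_defect n lam r)%Z) ->
    eps ^ (2 * weight n lam 1) = eps ^ (2 * condB_half n lam (size (supp n lam))).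
  move=> Hd; apply/(prim_expz2_eq l_odd eps_prim).
  rewrite weight1_sub_condB_half // rpredN.
  by rewrite big_nat_cond rpred_sum // => r /andP[/andP[r2 rm] _]; rewrite Hd ?r2.
by split=> -[Hd ->]; rewrite eps_weight1.
Qed.
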